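(* Let $V:\mathbb{R}^d\to\mathbb{R}$ be smooth and growing to infinity fast enough that the diffusion $dX_t=-\nabla V(X_t)\,dt+\sigma\,dW_t$ (with constant $\sigma>0$ and $d$-dimensional Wiener process $W_t$) is ergodic and reversible with invariant density $\mu(x)\propto\exp(-\beta V(x))$, $\beta=2/\sigma^2$. Let $\mathcal{L}f=\frac{\sigma^2}{2}\Delta f-\nabla V\cdot\nabla f$ be its generator, self-adjoint on $L^2_\mu$, with eigenvalues $0=\lambda_0>\lambda_1\ge\dots\ge\lambda_m$ (the $m+1$ dominant ones) and corresponding $L^2_\mu$-orthonormal eigenfunctions $\varphi_0\equiv 1,\varphi_1,\dots,\varphi_m$. Suppose $\chi=(\chi_0,\dots,\chi_m)^\top$ consists of smooth functions with $\chi_i\ge 0$, $\sum_{i=0}^m\chi_i=1$, and $\mathrm{span}\{\chi_0,\dots,\chi_m\}=\mathrm{span}\{\varphi_0,\dots,\varphi_m\}$. Let $C\in\mathbb{R}^{(m+1)\times(m+1)}$ be the invertible matrix with $\chi(x)=C\varphi(x)$ for all $x$, where $\varphi=(\varphi_0,\dots,\varphi_m)^\top$, let $L=\mathrm{diag}(\lambda_0,\dots,\lambda_m)$, and set $\mathcal{Q}=CLC^{-1}$, so that $\mathcal{L}\chi=\mathcal{Q}\chi$ componentwise. Consider the effective dynamics induced by the collective variable $\chi$ on the latent space $\chi(\mathbb{R}^d)\subset\mathbb{R}^{m+1}$, i.e. $dz_t=\widetilde b(z_t)\,dt+\sigma A(z_t)\,dW_t$ with $\widetilde b_l(z)=\Pi_\chi(\mathcal{L}\chi_l)(z)$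 and $(AA^\top)_{lk}(z)=\Pi_\chi\big(\sum_{i,j=1}^d\partial_{x_i}\chi_l\,\partial_{x_j}\chi_k\big)(z)$, and with generator $\tilde{\mathcal{L}}f(z)=\widetilde b(z)\cdot\nabla_z f(z)+\frac12\mathrm{Tr}\big(\tilde\sigma\tilde\sigma^\top(z)\nabla_z^2f(z)\big)$, where $\tilde\sigma=\sigma A$. Then $\widetilde b(z)=\mathcal{Q}z$, i.e. the effective dynamics is $dz_t=\mathcal{Q}z_t\,dt+\tilde\sigma(z_t)\,dW_t$ with generator $\tilde{\mathcal{L}}f(z)=(\mathcal{Q}z)^\top\nabla_zf(z)+\frac12\mathrm{Tr}\big(\tilde\sigma\tilde\sigma^\top(z)\nabla_z^2f(z)\big)$. Moreover, for each $i=0,\dots,m$, letting $v_i^\top=e_i^\top C^{-1}$ (the left eigenvector of $\mathcal{Q}$ for $\lambda_i$, with $e_i$ the $i$-th unit vector), the linear function $\tilde\varphi_i(z)=v_i^\top z$ satisfies $\tilde{\mathcal{L}}\tilde\varphi_i=\lambda_i\tilde\varphi_i$; in particular $\tilde{\mathcal{L}}$ has the eigenvalues $\lambda_0,\dots,\lambda_m$.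
   Context: For a collective variable $\xi:\mathbb{R}^d\to\mathbb{R}^k$, the coordinate projection is $\Pi_\xi f(x)=\mathbb{E}_\mu\big(f(x')\mid\xi(x')=\xi(x)\big)$, the average of $f$ with respect to $\mu$ conditioned on the level set $\{x':\xi(x')=\xi(x)\}$; since it is constant on level sets it is regarded as a function of $z=\xi(x)$ on the latent space. $L^2_\mu$ is the space of square-integrable functions with inner product $\langle f,g\rangle_\mu=\int fg\,\mu\,dx$. *)

From HB Require Import structures.
From mathcomp Require Import all_boot all_order all_algebra.
From mathcomp Require Import all_classical all_reals all_analysis.

Set Implicit Arguments.
Unset Strict Implicit.
Unset Printing Implicit Defensive.

Import Order.TTheory GRing.Theory Num.Theory.
Import numFieldNormedType.Exports.

Local Open Scope classical_set_scope.
Local Open Scope ring_scope.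

Section mx_measurable.
Context (R : realType) (p q : nat).

Definition mx_coord_sets : set (set 'M[R]_(p, q)) :=
  <<s [set A : set 'M[R]_(p, q) | open A] >>.

Lemma mx_coord_sets0 : mx_coord_sets set0.
Proof. exact: sigma_algebra0. Qed.

Lemma mx_coord_setsC A : mx_coord_sets A -> mx_coord_sets (~` A).
Proof. exact: sigma_algebraC. Qed.

Lemma mx_coord_sets_bigcup (F : (set 'M[R]_(p, q))^nat) :
  (forall i, mx_coord_sets (F i)) -> mx_coord_sets (\bigcup_i F i).
Proof. exact: sigma_algebra_bigcup. Qed.

HB.instance Definition _ := @isMeasurable.Build default_measure_display
  'M[R]_(p, q) mx_coord_sets mx_coord_sets0 mx_coord_setsC
  mx_coord_sets_bigcup.

End mx_measurable.

Section defs.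
Context {R : realType}.

(* Lebesgue measure on R^d, characterized by its values on half-open boxes
   (this determines it uniquely on the Borel sets). *)
Definition is_lebesgue_Rd (d : nat) (leb : {measure set 'rV[R]_d -> \bar R}) :=
  forall a b : 'rV[R]_d, (forall i, a ord0 i <= b ord0 i) ->
    leb [set x | forall i, a ord0 i <= x ord0 i < b ord0 i]
    = (\prod_i (b ord0 i - a ord0 i))%:E.

Definition erow (d : nat) (i : 'I_d) : 'rV[R]_d := delta_mx 0 i.
Definition ecol (n : nat) (i : 'I_n) : 'cV[R]_n := delta_mx i 0.

Definition partial (d : nat) (i : 'I_d) (f : 'rV[R]_d -> R) : 'rV[R]_d -> R :=
  fun x => derive f x (erow i).
Definition cpartial (n : nat) (i : 'I_n) (f : 'cV[R]_n -> R) : 'cV[R]_n -> R :=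
  fun z => derive f z (ecol i).

Fixpoint iter_partial (d : nat) (s : seq 'I_d) (f : 'rV[R]_d -> R) :=
  match s with
  | [::] => f
  | i :: s' => partial i (iter_partial s' f)
  end.

Definition smooth (d : nat) (f : 'rV[R]_d -> R) :=
  forall s : seq 'I_d, continuous (iter_partial s f) /\
    forall (i : 'I_d) (x : 'rV[R]_d), derivable (iter_partial s f) x (erow i).

Definition gibbs (d : nat) (beta : R) (V : 'rV[R]_d -> R) (x : 'rV[R]_d) : R :=
  expR (- (beta * V x)).

Definition in_L2 (d : nat) (leb : {measure set 'rV[R]_d -> \bar R})
    (beta : R) (V : 'rV[R]_d -> R) (f : 'rV[R]_d -> R) :=
  measurable_fun setT f /\
  leb.-integrable setT (fun x => (f x ^+ 2 * gibbs beta V x)%:E).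

Definition L2dot (d : nat) (leb : {measure set 'rV[R]_d -> \bar R})
    (beta : R) (V : 'rV[R]_d -> R) (f g : 'rV[R]_d -> R) : R :=
  Rintegral leb setT (fun x => f x * g x * gibbs beta V x)
  / Rintegral leb setT (gibbs beta V).

Definition gen (d : nat) (sigma : R) (V f : 'rV[R]_d -> R) : 'rV[R]_d -> R :=
  fun x => sigma ^+ 2 / 2 * (\sum_i partial i (partial i f) x)
           - \sum_i partial i V x * partial i f x.

(* A regular conditional distribution of mu given the collective variable
   xi, whose fibre measures kappa (xi x) live on the level sets
   {x' | xi x' = xi x}.  The coordinate projection is then
   Pi_xi f (z) = int f d(kappa z). *)
Definition level_set_disintegration (d n : nat)
    (leb : {measure set 'rV[R]_d -> \bar R}) (beta : R) (V : 'rV[R]_d -> R)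
    (xi : 'rV[R]_d -> 'cV[R]_n)
    (kappa : R.-pker 'cV[R]_n ~> 'rV[R]_d) :=
  (forall x, kappa (xi x) [set y | xi y != xi x] = 0%E) /\
  (forall (A : set 'rV[R]_d) (B : set 'cV[R]_n), measurable A -> measurable B ->
     (\int[leb]_(x in A `&` xi @^-1` B) (gibbs beta V x)%:E
      = \int[leb]_(x in xi @^-1` B) (kappa (xi x) A * (gibbs beta V x)%:E))%E).

Definition coord_proj (d n : nat) (kappa : R.-pker 'cV[R]_n ~> 'rV[R]_d)
    (f : 'rV[R]_d -> R) (z : 'cV[R]_n) : R :=
  Rintegral (kappa z) setT f.

Definition chess (n : nat) (f : 'cV[R]_n -> R) (z : 'cV[R]_n) : 'M[R]_n :=
  \matrix_(l, k) cpartial l (cpartial k f) z.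

Definition gen_eff (n d : nat) (b : 'cV[R]_n -> 'cV[R]_n)
    (sigt : 'cV[R]_n -> 'M[R]_(n, d)) (f : 'cV[R]_n -> R) (z : 'cV[R]_n) : R :=
  \sum_l b z l 0 * cpartial l f z
  + 1 / 2 * \tr (sigt z *m (sigt z)^T *m chess f z).

End defs.

From HB Require Import structures.
From mathcomp Require Import all_boot all_order all_algebra.
From mathcomp Require Import all_classical all_reals all_analysis.
From mathcomp Require Import measurable_realfun.

Import Order.TTheory GRing.Theory Num.Theory.
Import numFieldNormedType.Exports.
Local Open Scope classical_set_scope.
Local Open Scope ring_scope.

(* Because chi = C phi and L phi_j = lam_j phi_j, the drift L chi = Q chi is itself a
   function of chi; it is therefore constant on every level set of chi, and conditioning
   on chi(x) = z returns it unchanged, so the effective drift is z |-> Q z.  On a linear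
   function v^T z the effective generator has no second-order part, hence acts as
   v^T Q z; for v = v_i the row identity v_i^T Q = lam_i v_i^T makes it an
   eigenfunction.  It is not identically zero on the latent space since v_i^T chi = phi_i
   has L^2_mu norm 1. *)

Section effective_dynamics.
Context {R : realType}.

Lemma derive_affine_line (U W : normedModType R) (f : U -> W) (z v : U) (c : W) :
  (forall h : R, f (h *: v + z) = f z + h *: c) -> derive f z v = c.
Proof.
move=> f_line; rewrite /derive; apply: norm_lim_near_cst.
near=> h.
have h_neq0 : h != 0 by near: h; exact: nbhs_dnbhs_neq.
by rewrite /= f_line addrC addKr scalerA mulVf // scale1r.
Unshelve. all: by end_near.
Qed.

Lemma cpartial_linear_form (n : nat) (u : 'rV[R]_n) (l : 'I_n) :
  cpartial l (fun z => (u *m z) 0 0) = fun=> u 0 l.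
Proof.
apply: funext => z; apply: derive_affine_line => h.
rewrite mulmxDr -scalemxAr [in LHS]mxE addrC; congr (_ + _).
by rewrite mxE /ecol -colE !mxE.
Qed.

Lemma gen_eff_linear_form (n d : nat) (b : 'cV[R]_n -> 'cV[R]_n)
    (sigt : 'cV[R]_n -> 'M[R]_(n, d)) (u : 'rV[R]_n) (z : 'cV[R]_n) :
  gen_eff b sigt (fun z => (u *m z) 0 0) z = (u *m b z) 0 0.
Proof.
have hess0 : chess (fun z => (u *m z) 0 0) z = 0.
  apply/matrixP => l k; rewrite !mxE cpartial_linear_form.
  exact: derive_cst.
rewrite /gen_eff hess0 mulmx0 mxtrace0 mulr0 addr0 [RHS]mxE.
by apply: eq_bigr => l _; rewrite cpartial_linear_form mulrC.
Qed.

Lemma partial_lincomb {n d : nat} (i : 'I_d) (c : 'I_n -> R)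
    {f : 'I_n -> 'rV[R]_d -> R} :
  (forall j x, derivable (f j) x (erow i)) ->
  partial i (fun x => \sum_j c j * f j x)
  = fun x => \sum_j c j * partial i (f j) x.
Proof.
move=> f_der; apply: funext => x; rewrite /partial.
have -> : (fun x => \sum_j c j * f j x) = \sum_j (c j \*: f j).
  by rewrite fct_sumE; apply: funext.
rewrite derive_sum => [|j]; last exact: derivableZ.
by apply: eq_bigr => j _; rewrite deriveZ.
Qed.

Lemma gen_lincomb (n d : nat) (sigma : R) (V : 'rV[R]_d -> R) (c : 'I_n -> R)
    (f : 'I_n -> 'rV[R]_d -> R) :
  (forall i j x, derivable (f j) x (erow i)) ->
  (forall i j x, derivable (partial i (f j)) x (erow i)) ->
  gen sigma V (fun x => \sum_j c j * f j x)
  = fun x => \sum_j c j * gen sigma V (f j) x.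
Proof.
move=> f_der partial_der; apply: funext => x; rewrite /gen.
under eq_bigr => i _ do
  rewrite (partial_lincomb i c (f_der i)) (partial_lincomb i c (partial_der i)).
under [X in _ - X]eq_bigr => i _ do
  rewrite (partial_lincomb i c (f_der i)) mulr_sumr.
rewrite exchange_big [X in _ - X]exchange_big /= mulr_sumr -sumrB.
apply: eq_bigr => j _; rewrite mulrBr !mulr_sumr.
by congr (_ - _); apply: eq_bigr => i _; rewrite mulrCA.
Qed.

Lemma smooth_derivable {d : nat} {f : 'rV[R]_d -> R} : smooth f ->
  forall i x, derivable f x (erow i) /\ derivable (partial i f) x (erow i).
Proof.
by move=> f_smooth i x; split; [exact: (f_smooth [::]).2 | exact: (f_smooth [:: i]).2].
Qed.

Lemma measurable_col_neq (d n : nat) (f : 'I_n -> 'rV[R]_d -> R) (z : 'cV[R]_n) :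
  (forall i, continuous (f i)) -> measurable [set y | \col_i f i y != z].
Proof.
move=> f_cont.
have -> : [set y | \col_i f i y != z] = \bigcup_i (f i @^-1` [set r | r != z i 0]).
  apply/seteqP; split => y /=.
  - move=> /eqP neq_z; apply: contrapT => not_in; apply: neq_z.
    apply/matrixP => i k; rewrite ord1 mxE; apply: contrapT => /eqP neq_i.
    by apply: not_in; exists i.
  - by case=> i _; apply: contra_neq => <-; rewrite mxE.
apply: sub_sigma_algebra; apply: bigcup_open => i _.
apply: open_comp; last exact: open_neq.
by move=> y _; exact: f_cont.
Qed.

Lemma coord_proj_fibre_cst (d n : nat) (kappa : R.-pker 'cV[R]_n ~> 'rV[R]_d)
    (xi : 'rV[R]_d -> 'cV[R]_n) (z : 'cV[R]_n) (f : 'rV[R]_d -> R) (c : R) :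
  measurable [set y | xi y != z] -> kappa z [set y | xi y != z] = 0%E ->
  measurable_fun setT f -> (forall y, xi y = z -> f y = c) ->
  coord_proj kappa f z = c.
Proof.
move=> mN kappaN0 mf f_fibre; rewrite /coord_proj /Rintegral.
rewrite (ae_eq_integral (fun=> c%:E)) //.
- by rewrite -/(Rintegral _ _ (fun=> c)) Rintegral_cst // prob_kernel mulr1.
- exact/measurable_EFinP.
- exists [set y | xi y != z]; split => // y /= fy_neq; apply/eqP => xi_y.
  by apply: fy_neq => _; rewrite f_fibre.
Qed.

Lemma row_invmx_conj_diag (n : nat) (C : 'M[R]_n) (r : 'rV[R]_n) (i : 'I_n) :
  C \in unitmx -> row i (invmx C) *m (C *m diag_mx r *m invmx C)
                  = r 0 i *: row i (invmx C).
Proof.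
move=> C_unit.
by rewrite !mulmxA -row_mul mulVmx // -row_mul mul1mx row_diag_mx -scalemxAl -rowE.
Qed.

Lemma L2dot_self_neq0_exists (d : nat) (leb : {measure set 'rV[R]_d -> \bar R})
    (beta : R) (V f : 'rV[R]_d -> R) :
  L2dot leb beta V f f != 0 -> exists x, f x != 0.
Proof.
apply: contraNP => /forallNP f_neq0.
have f_eq0 x : f x = 0 by apply/eqP/negPn/negP/f_neq0.
rewrite /L2dot; under eq_Rintegral => x _ do rewrite f_eq0 !mul0r.
by rewrite Rintegral_cst // !mul0r.
Qed.

End effective_dynamics.

Theorem mainTheorem1 (R : realType) (d m : nat) (sigma : R)
  (V : 'rV[R]_d -> R) (leb : {measure set 'rV[R]_d -> \bar R})
  (lam : 'I_m.+1 -> R) (phi chi : 'I_m.+1 -> 'rV[R]_d -> R)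
  (C : 'M[R]_m.+1)
  (kappa : R.-pker 'cV[R]_m.+1 ~> 'rV[R]_d)
  (A : 'cV[R]_m.+1 -> 'M[R]_(m.+1, d)) :
  0 < sigma ->
  is_lebesgue_Rd leb ->
  smooth V ->
  leb.-integrable setT (fun x => (gibbs (2 / sigma ^+ 2) V x)%:E) ->
  (* spectrum: 0 = lam_0 > lam_1 >= ... >= lam_m *)
  lam ord0 = 0 ->
  (forall i : 'I_m.+1, (0 < i)%N -> lam i < 0) ->
  (forall i j : 'I_m.+1, (i <= j)%N -> lam j <= lam i) ->
  (* eigenfunctions phi_0 = 1, phi_1, ..., phi_m, orthonormal in L^2_mu *)
  (forall i, smooth (phi i)) ->
  (forall i, in_L2 leb (2 / sigma ^+ 2) V (phi i)) ->
  phi ord0 = (fun=> 1) ->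
  (forall i, gen sigma V (phi i) = (fun x => lam i * phi i x)) ->
  (forall i j, L2dot leb (2 / sigma ^+ 2) V (phi i) (phi j) = (i == j)%:R) ->
  (* they are the m+1 dominant ones *)
  (forall (f : 'rV[R]_d -> R) (l : R), smooth f ->
     in_L2 leb (2 / sigma ^+ 2) V f ->
     L2dot leb (2 / sigma ^+ 2) V f f != 0 ->
     gen sigma V f = (fun x => l * f x) ->
     (forall i, L2dot leb (2 / sigma ^+ 2) V f (phi i) = 0) ->
     l <= lam ord_max) ->
  (* the collective variable chi *)
  (forall i, smooth (chi i)) ->
  (forall i x, 0 <= chi i x) ->
  (forall x, \sum_i chi i x = 1) ->
  (forall i, exists c : 'I_m.+1 -> R, chi i = (fun x => \sum_j c j * phi j x)) ->
  (forall i, exists c : 'I_m.+1 -> R, phi i = (fun x => \sum_j c j * chi j x)) ->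
  C \in unitmx ->
  (forall i x, chi i x = \sum_j C i j * phi j x) ->
  (* coordinate projection Pi_chi, realized by a disintegration of mu
     along the level sets of chi *)
  level_set_disintegration leb (2 / sigma ^+ 2) V
    (fun x => \col_i chi i x) kappa ->
  (* diffusion coefficient A A^T = Pi_chi(sum_{i,j} d_i chi_l d_j chi_k) *)
  (forall x, let z := \col_i chi i x in
     A z *m (A z)^T
     = \matrix_(l, k) coord_proj kappa
         (fun y => \sum_i \sum_j partial i (chi l) y * partial j (chi k) y) z) ->
  let Q := C *m diag_mx (\row_i lam i) *m invmx C in
  let bt := fun z : 'cV[R]_m.+1 =>
    \col_l coord_proj kappa (gen sigma V (chi l)) z in
  let sigt := fun z : 'cV[R]_m.+1 => sigma *: A z in
  (forall x, let z := \col_i chi i x in bt z = Q *m z) /\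
  (forall i : 'I_m.+1,
     let phit := fun z : 'cV[R]_m.+1 => (row i (invmx C) *m z) 0 0 in
     (forall x, let z := \col_i chi i x in
        gen_eff bt sigt phit z = lam i * phit z) /\
     (exists x, phit (\col_i chi i x) != 0)).
Proof.
move=> _ _ _ _ _ _ _ phi_smooth phi_L2 _ phi_eigen phi_orth _ chi_smooth _ _ _ _
  C_unit chiE disint _ Q bt sigt.
have chi_col x : \col_i chi i x = C *m \col_j phi j x.
  by apply/matrixP => i k; rewrite ord1 !mxE chiE; apply: eq_bigr => j _; rewrite mxE.
have gen_chi_phi l :
    gen sigma V (chi l) = fun x => \sum_j C l j * (lam j * phi j x).
  rewrite (_ : chi l = fun x => \sum_j C l j * phi j x); last exact: funext.
  rewrite gen_lincomb => [|i j x|i j x]; last 2 first.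
  - exact: (smooth_derivable (phi_smooth j) i x).1.
  - exact: (smooth_derivable (phi_smooth j) i x).2.
  by apply: funext => x; apply: eq_bigr => j _; rewrite phi_eigen.
have gen_chi l x : gen sigma V (chi l) x = (Q *m \col_i chi i x) l 0.
  rewrite gen_chi_phi chi_col /Q -!mulmxA (mulmxA (invmx C)) mulVmx // mul1mx.
  rewrite mulmxA mul_mx_diag !mxE.
  by apply: eq_bigr => j _; rewrite !mxE mulrA.
have drift x : bt (\col_i chi i x) = Q *m \col_i chi i x.
  apply/matrixP => l k; rewrite ord1 mxE; apply: coord_proj_fibre_cst.
  - by apply: measurable_col_neq => i; exact: (chi_smooth i [::]).1.
  - exact: disint.1.
  - rewrite gen_chi_phi; apply: measurable_sum => j.
    by apply/measurable_funM/measurable_funM => //; case: (phi_L2 j).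
  - by move=> y chi_y; rewrite gen_chi chi_y.
split=> // i phit; split.
- move=> x z.
  by rewrite gen_eff_linear_form drift mulmxA row_invmx_conj_diag // -scalemxAl mxE mxE.
- have phit_chi x : phit (\col_i chi i x) = phi i x.
    by rewrite /phit chi_col mulmxA -row_mul mulVmx // row1 -rowE !mxE.
  have [|x phi_x] := @L2dot_self_neq0_exists _ _ leb (2 / sigma ^+ 2) V (phi i).
    by rewrite phi_orth eqxx oner_neq0.
  by exists x; rewrite phit_chi.
Qed.
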